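(* Let $\mathcal D[t]\subset\mathcal H\subset\mathcal D^\times[t^\times]$ be a rigged Hilbert space with $\mathcal D[t]$ a reflexive Fréchet space, $(X,\mu)$ a $\sigma$-finite measure space, $\omega,\theta$ Bessel distribution maps and $m\in L^\infty(X,\mu)$. Suppose the outer multiplier $\mathcal M_{m,\omega,\theta}:\mathcal D\to\mathcal D^\times$ is bijective with continuous inverse $\mathcal D^\times[t^\times]\to\mathcal D[t]$. Then (i) $M_{m,\omega,\theta}:D(M_{m,\omega,\theta})\to\mathcal H$ is bijective, densely defined in $\mathcal H$, and has a bounded inverse (in particular it is closed); (ii) $(M_{m,\omega,\theta})^*=M_{\overline m,\theta,\omega}$.
   Context: Rigged Hilbert space: $\mathcal D$ dense subspace of Hilbert space $\mathcal H$ with a locally convex topology $t$ finer than the norm topology, $\mathcal D^\times$ its conjugate dual with strong dual topology, $\mathcal H\subset\mathcal D^\times$ (continuous dense inclusions), pairing $\langle F,f\rangle$ extending the inner product, $\langle f,F\rangle:=\overline{\langle F,f\rangle}$. $\omega:X\to\mathcal D^\times$ is a Bessel distribution map if $x\mapsto\langle f,\omega_x\rangle$ is measurable and $\int_X|\langle f,\omega_x\rangle|^2d\mu<\infty$ for all $f\in\mathcal D$. Outer distribution multiplier: $\mathcal M_{m,\omega,\theta}$ is the continuous linear map $\mathcal D\to\mathcal D^\times$ with $\langle\mathcal M_{m,\omega,\theta}f,g\rangle=\int_X m(x)\langle f,\omega_x\rangle\langle\theta_x,g\rangle d\mu$ for $f,g\in\mathcal D$. Distribution multiplier $M_{m,\omega,\theta}$: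 domain is the set of $f\in\mathcal D$ for which $g\mapsto\int_X m(x)\langle f,\omega_x\rangle\langle\theta_x,g\rangle d\mu$ ($g\in\mathcal D$) is defined and bounded in the $\mathcal H$-norm, and $M_{m,\omega,\theta}f\in\mathcal H$ is its Riesz representative (equivalently, $D(M_{m,\omega,\theta})=\{f\in\mathcal D:\mathcal M_{m,\omega,\theta}f\in\mathcal H\}$ and $M_{m,\omega,\theta}$ is the restriction of $\mathcal M_{m,\omega,\theta}$). *)

From mathcomp Require Import all_boot all_algebra all_classical all_reals all_analysis.
From mathcomp Require Export complex.
Import GRing.Theory Num.Theory.

Set Implicit Arguments.
Unset Strict Implicit.
Unset Printing Implicit Defensive.

Local Open Scope classical_set_scope.
Local Open Scope ring_scope.

Section RiggedDefs.
Variable R : realType.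
Local Notation C := (R[i]).

Definition cnorm2 (z : C) : R := complex.Re z ^+ 2 + complex.Im z ^+ 2.
Definition cabs (z : C) : R := Num.sqrt (cnorm2 z).

Section GenericDual.
Variable V : lmodType C.
Variable op : set V -> Prop.   (* the open sets (subsets of S) *)
Variable S : set V.            (* the carrier: a linear subspace of V *)

Definition nbhd_in (x : V) (U : set V) := exists A, op A /\ A x /\ A `<=` U.

Definition bounded_in (B : set V) :=
  B `<=` S /\
  forall U, nbhd_in 0 U ->
    exists2 r : R, 0 < r &
      forall lam : C, r < cabs lam -> forall b, B b -> U (lam^-1 *: b).

Definition conj_linear_on (phi : V -> C) :=
  forall (a : C) x y, S x -> S y -> phi (a *: x + y) = a^* * phi x + phi y.

Definition continuous_on_S (phi : V -> C) :=
  forall x, S x -> forall e : R, 0 < e ->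
    nbhd_in x [set y | S y -> cabs (phi y - phi x) < e].

Definition cdual_of : set (V -> C) :=
  [set phi | conj_linear_on phi /\ continuous_on_S phi /\
             (forall x, ~ S x -> phi x = 0)].

(* the strong dual topology: uniform convergence on bounded subsets *)
Definition strong_open (A : set (V -> C)) : Prop :=
  A `<=` cdual_of /\
  forall F, A F -> exists B, bounded_in B /\
    exists2 e : R, 0 < e &
      forall G, cdual_of G -> (forall b, B b -> cabs (G b - F b) < e) -> A G.
End GenericDual.

Section OnD.
Variable D : tvsType C.

Definition Dx : set (D -> C) := cdual_of (@open D) setT.
Definition Dx_open : set (D -> C) -> Prop := strong_open (@open D) setT.
Definition Dxx : set ((D -> C) -> C) := cdual_of Dx_open Dx.
Definition Dxx_open : set ((D -> C) -> C) -> Prop := strong_open Dx_open Dx.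

Definition Jcan (f : D) : (D -> C) -> C :=
  fun F => if `[< Dx F >] then (F f)^* else 0.

Definition reflexive_space : Prop :=
  (forall f, Dxx (Jcan f)) /\ injective Jcan /\
  (forall Phi, Dxx Phi -> exists f, Jcan f = Phi) /\
  (forall U : set D, open U <-> Dxx_open (Jcan @` U)).

Definition metrizable_space : Prop :=
  exists dist : D -> D -> R,
    (forall x y, 0 <= dist x y) /\ (forall x y, dist x y = 0 <-> x = y) /\
    (forall x y, dist x y = dist y x) /\
    (forall x y z, dist x z <= dist x y + dist y z) /\
    (forall x (A : set D), nbhs x A <->
       exists2 e : R, 0 < e & [set y | dist x y < e] `<=` A).

Definition frechet_space : Prop :=
  hausdorff_space D /\ metrizable_space /\
  (forall F : set_system D, ProperFilter F -> cauchy F -> exists x : D, F --> x).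
End OnD.
Arguments Dx : clear implicits.
Arguments Dx_open : clear implicits.
Arguments Dxx : clear implicits.
Arguments Dxx_open : clear implicits.

Section Hilbert.
Variable H : lmodType C.
Variable ip : H -> H -> C.     (* linear in the first argument *)

Definition hnorm (x : H) : R := Num.sqrt (complex.Re (ip x x)).

Definition hilbert_space : Prop :=
  (forall (a : C) x y z, ip (a *: x + y) z = a * ip x z + ip y z) /\
  (forall x y, ip y x = (ip x y)^*) /\
  (forall x, 0 <= ip x x) /\ (forall x, ip x x = 0 -> x = 0) /\
  (forall u : nat -> H,
     (forall e : R, 0 < e -> exists N, forall p q, (N <= p)%N -> (N <= q)%N ->
         hnorm (u p - u q) < e) ->
     exists l, forall e : R, 0 < e -> exists N, forall p, (N <= p)%N ->
         hnorm (u p - l) < e).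

(** rigged Hilbert space D[t] ⊂ H ⊂ D^x[t^x]; iota is the inclusion D -> H *)
Variable D : tvsType C.
Variable iota : D -> H.

(* the inclusion H -> D^x : <h, f> = (h | f) *)
Definition jH (h : H) : D -> C := fun f => ip h (iota f).

Definition rigged_hilbert_space : Prop :=
  hilbert_space /\
  (forall (a : C) x y, iota (a *: x + y) = a *: iota x + iota y) /\
  injective iota /\
  (* t finer than the norm topology *)
  (forall x (e : R), 0 < e -> nbhs x [set y | hnorm (iota y - iota x) < e]) /\
  (forall h (e : R), 0 < e -> exists f, hnorm (h - iota f) < e) /\
  (forall h, Dx D (jH h)) /\
  (forall h (A : set (D -> C)), Dx_open D A -> A (jH h) ->
     exists2 e : R, 0 < e & forall h', hnorm (h' - h) < e -> A (jH h')) /\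
  (forall A : set (D -> C), Dx_open D A -> (exists F, A F) ->
     exists h, A (jH h)).

(** adjoint and graph of an operator with domain iota(dom) ⊂ H *)
Definition op_graph (dom : set D) (T : D -> H) : set (H * H) :=
  [set (iota f, T f) | f in dom].
Definition adjoint_graph (dom : set D) (T : D -> H) : set (H * H) :=
  [set gh | forall f, dom f -> ip (T f) gh.1 = ip (iota f) gh.2].
End Hilbert.

Section Multipliers.
Context (d : measure_display) (X : measurableType d) (mu : {measure set X -> \bar R}).

Definition cmeasurable (f : X -> C) :=
  measurable_fun setT (fun x => complex.Re (f x)) /\
  measurable_fun setT (fun x => complex.Im (f x)).

Definition cintegral (f : X -> C) : C :=
  (Rintegral mu setT (fun x => complex.Re (f x)) +i*
   Rintegral mu setT (fun x => complex.Im (f x)))%C.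

Definition Linfty (m : X -> C) :=
  cmeasurable m /\ exists K : R, \forall x \ae mu, cabs (m x) <= K.

Variable D : tvsType C.

(* Bessel distribution map omega : X -> D^x; <f, omega_x> = conj (omega_x f) *)
Definition bessel_map (om : X -> D -> C) :=
  (forall x, Dx D (om x)) /\
  forall f, cmeasurable (fun x => (om x f)^*) /\
    (\int[mu]_x (cnorm2 ((om x f)^*))%:E < +oo)%E.

(* outer multiplier: <M f, g> = \int m(x) <f,om_x> <th_x,g> dmu *)
Definition outer_mult (m : X -> C) (om th : X -> D -> C) (f : D) : D -> C :=
  fun g => cintegral (fun x => m x * (om x f)^* * th x g).

Variable H : lmodType C.
Variable ip : H -> H -> C.
Variable iota : D -> H.

(* h is the Riesz representative of M_out f *)
Definition mult_rel m om th (f : D) (h : H) :=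
  forall g, outer_mult m om th f g = ip h (iota g).

Definition mult_dom m om th : set D := [set f | exists h, mult_rel m om th f h].

Definition mult_op m om th (f : D) : H :=
  match pselect (exists h, mult_rel m om th f h) with
  | left e => projT1 (cid e)
  | right _ => 0
  end.
End Multipliers.
End RiggedDefs.
Arguments Dx {R} D.
Arguments Dx_open {R} D.
Arguments Dxx {R} D.
Arguments Dxx_open {R} D.

From mathcomp Require Import all_boot all_algebra all_classical all_reals all_analysis.
From mathcomp Require Import complex.
From mathcomp Require Import ring lra.
From mathcomp Require Import measurable_realfun.
Import order.Order.TTheory GRing.Theory Num.Theory.
Local Open Scope classical_set_scope.
Local Open Scope ring_scope.

(* The Riesz representative M f exists exactly when the outer multiplier maps
   f into H, so M is the restriction of M_out to M_out^-1(H) and its inverse is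
   the restriction of M_out^-1 to H.  Continuity of M_out^-1 and of the
   embeddings D -> H -> D^x bounds |f| by a multiple of |M f| (scale h into a
   small ball), and together with the density of D in H and of H in D^x it
   makes the domain dense; a bounded inverse defined on all of H forces M to
   be closed.  For the adjoint, M_out for (conj m, theta, omega) is the
   transpose of M_out.  If (g, k) lies on the graph of M^*, the functional
   F |-> (k | M_out^-1 F) is continuous on D^x, hence by reflexivity it is
   evaluation at some f' in D; this f' satisfies M_{conj m,theta,omega} f' = k,
   and g = iota f' since both have the same inner products against the range
   of M, which is all of H. *)

Section ComplexFacts.
Context {R : realType}.
Implicit Types (z w : R[i]) (r : R).

Lemma cReJ z : complex.Re z^* = complex.Re z. Proof. by case: z. Qed.
Lemma cImJ z : complex.Im z^* = - complex.Im z. Proof. by case: z. Qed.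
Lemma cReD z w : complex.Re (z + w) = complex.Re z + complex.Re w.
Proof. by case: z; case: w. Qed.
Lemma cImD z w : complex.Im (z + w) = complex.Im z + complex.Im w.
Proof. by case: z; case: w. Qed.
Lemma cReN z : complex.Re (- z) = - complex.Re z. Proof. by case: z. Qed.
Lemma cReM z w :
  complex.Re (z * w) = complex.Re z * complex.Re w - complex.Im z * complex.Im w.
Proof. by case: z; case: w. Qed.
Lemma cImM z w :
  complex.Im (z * w) = complex.Re z * complex.Im w + complex.Im z * complex.Re w.
Proof. by case: z; case: w. Qed.
Lemma cRJ r : (r%:C)%C^* = (r%:C)%C.
Proof. by apply/eqP; rewrite eq_complex /= oppr0 !eqxx. Qed.

Lemma cnorm2_ge0 z : 0 <= cnorm2 z.
Proof. by rewrite /cnorm2 addr_ge0 // sqr_ge0. Qed.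
Lemma cnorm2R r : cnorm2 (r%:C)%C = r ^+ 2.
Proof. by rewrite /cnorm2 /= expr0n addr0. Qed.
Lemma cnorm2J z : cnorm2 z^* = cnorm2 z.
Proof. by rewrite /cnorm2 cReJ cImJ sqrrN. Qed.
Lemma cnorm2M z w : cnorm2 (z * w) = cnorm2 z * cnorm2 w.
Proof. rewrite /cnorm2 cReM cImM; case: z; case: w => a b c e /=; ring. Qed.

Lemma cabs_ge0 z : 0 <= cabs z. Proof. exact: sqrtr_ge0. Qed.
Lemma cabsM z w : cabs (z * w) = cabs z * cabs w.
Proof. by rewrite /cabs cnorm2M sqrtrM // cnorm2_ge0. Qed.
Lemma cabs_sqr z : cabs z ^+ 2 = cnorm2 z.
Proof. by rewrite /cabs sqr_sqrtr // cnorm2_ge0. Qed.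

Lemma cabs_Re z : `|complex.Re z| <= cabs z.
Proof. by rewrite /cabs -sqrtr_sqr ler_sqrt ?cnorm2_ge0 // lerDl sqr_ge0. Qed.
Lemma cabs_Im z : `|complex.Im z| <= cabs z.
Proof. by rewrite /cabs -sqrtr_sqr ler_sqrt ?cnorm2_ge0 // lerDr sqr_ge0. Qed.

Lemma cabs_le_ReIm z : cabs z <= `|complex.Re z| + `|complex.Im z|.
Proof.
rewrite -[X in _ <= X]ger0_norm ?addr_ge0 // -sqrtr_sqr ler_sqrt ?sqr_ge0 //.
rewrite /cnorm2 -[complex.Re z ^+ 2]real_normK ?num_real //.
rewrite -[complex.Im z ^+ 2]real_normK ?num_real //.
by rewrite sqrrD addrAC lerDl mulrn_wge0 ?mulr_ge0 ?normr_ge0.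
Qed.

Lemma cabsM_le_cnorm2D z w : cabs z * cabs w <= cnorm2 z + cnorm2 w.
Proof.
rewrite -!cabs_sqr; have := sqr_ge0 (cabs z - cabs w).
have := cabs_ge0 z; have := cabs_ge0 w; rewrite !expr2; nra.
Qed.
End ComplexFacts.

Definition hnorm2 {R : realType} {H : lmodType R[i]} (ip : H -> H -> R[i]) (x : H) : R :=
  complex.Re (ip x x).

Section PreHilbert.
Context {R : realType} {H : lmodType R[i]} {ip : H -> H -> R[i]}.
Hypothesis hH : hilbert_space ip.
Local Notation hnorm2 := (hnorm2 ip).

Lemma ipDl a x y z : ip (a *: x + y) z = a * ip x z + ip y z.
Proof. by case: hH => h _; apply: h. Qed.
Lemma ipC x y : ip y x = (ip x y)^*.
Proof. by case: hH => _ [h _]; apply: h. Qed.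
Lemma ip_ge0 x : 0 <= ip x x.
Proof. by case: hH => _ [_ [h _]]; apply: h. Qed.
Lemma ip_eq0 x : ip x x = 0 -> x = 0.
Proof. by case: hH => _ [_ [_ [h _]]]; apply: h. Qed.

Lemma ipDr a x y z : ip z (a *: x + y) = a^* * ip z x + ip z y.
Proof. by rewrite ipC ipDl rmorphD rmorphM /= -!ipC. Qed.
Lemma ip0l z : ip 0 z = 0.
Proof. by have := ipDl (-1) z z z; rewrite scaleN1r addNr mulN1r addNr. Qed.
Lemma ip0r z : ip z 0 = 0.
Proof. by rewrite ipC ip0l conjC0. Qed.
Lemma ipZl a x z : ip (a *: x) z = a * ip x z.
Proof. by have := ipDl a x 0 z; rewrite addr0 ip0l addr0. Qed.
Lemma ipZr a x z : ip z (a *: x) = a^* * ip z x.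
Proof. by have := ipDr a x 0 z; rewrite addr0 ip0r addr0. Qed.
Lemma ipDl1 x y z : ip (x + y) z = ip x z + ip y z.
Proof. by have := ipDl 1 x y z; rewrite scale1r mul1r. Qed.
Lemma ipDr1 x y z : ip z (x + y) = ip z x + ip z y.
Proof. by have := ipDr 1 x y z; rewrite scale1r conjC1 mul1r. Qed.
Lemma ipNl x z : ip (- x) z = - ip x z.
Proof. by rewrite -scaleN1r ipZl mulN1r. Qed.
Lemma ipNr x z : ip z (- x) = - ip z x.
Proof. by rewrite -scaleN1r ipZr conjCN1 mulN1r. Qed.
Lemma ipBl x y z : ip (x - y) z = ip x z - ip y z.
Proof. by rewrite ipDl1 ipNl. Qed.
Lemma ipBr x y z : ip z (x - y) = ip z x - ip z y.
Proof. by rewrite ipDr1 ipNr. Qed.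

Lemma ip_real x : ip x x = (hnorm2 x)%:C%C.
Proof.
have := ip_ge0 x; rewrite lecE /= => /andP[/eqP hIm _].
by apply/eqP; rewrite eq_complex /= -hIm !eqxx.
Qed.
Lemma hnorm2_ge0 x : 0 <= hnorm2 x.
Proof. by have := ip_ge0 x; rewrite lecE => /andP[_]. Qed.
Lemma hnorm2_eq0 x : hnorm2 x = 0 -> x = 0.
Proof. by move=> h; apply: ip_eq0; rewrite ip_real h. Qed.
Lemma hnorm2_0 : hnorm2 0 = 0.
Proof. by rewrite /hnorm2 ip0l. Qed.
Lemma hnorm2N x : hnorm2 (- x) = hnorm2 x.
Proof. by rewrite /hnorm2 ipNl ipNr opprK. Qed.
Lemma hnorm2Z c x : hnorm2 (c *: x) = cnorm2 c * hnorm2 x.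
Proof.
rewrite /hnorm2 ipZl ipZr ip_real mulrA cReM /= mulr0 subr0.
by rewrite cReM cReJ cImJ /cnorm2; congr (_ * _); ring.
Qed.

Lemma hnorm_lt x (e : R) : 0 < e -> (hnorm ip x < e) = (hnorm2 x < e ^+ 2).
Proof.
move=> e0; rewrite /hnorm -/(hnorm2 x) -(ltr_sqrt (hnorm2 x)) ?exprn_gt0 //.
by rewrite sqrtr_sqr gtr0_norm.
Qed.
Lemma hnorm_lt_sqrt x (e : R) : 0 < e -> (hnorm ip x < Num.sqrt e) = (hnorm2 x < e).
Proof. by move=> e0; rewrite hnorm_lt ?sqrtr_gt0 // sqr_sqrtr // ltW. Qed.

(* Expanding [0 <= hnorm2 (s x - y)]. *)
Lemma Re_ip_le x y (s : R) : 0 < s ->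
  2 * complex.Re (ip x y) <= s * hnorm2 x + hnorm2 y / s.
Proof.
move=> s0; have := hnorm2_ge0 ((s%:C)%C *: x - y).
have -> : hnorm2 ((s%:C)%C *: x - y) =
    s * s * hnorm2 x - 2 * s * complex.Re (ip x y) + hnorm2 y.
  rewrite /hnorm2 ipBl !ipBr !ipZl !ipZr cRJ [ip y x]ipC.
  by rewrite !(cReD, cReN, cReM, cReJ) /= !mul0r !subr0; ring.
move=> h; rewrite -(ler_pM2l s0) mulrDr.
have -> : s * (hnorm2 y / s) = hnorm2 y by rewrite mulrCA divff ?mulr1 ?gt_eqF.
rewrite !mulrA; lra.
Qed.

Lemma hnorm2D x y : hnorm2 (x + y) <= 2 * (hnorm2 x + hnorm2 y).
Proof.
have := Re_ip_le x y 1 ltr01; rewrite mul1r divr1.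
have -> : hnorm2 (x + y) = hnorm2 x + 2 * complex.Re (ip x y) + hnorm2 y.
  by rewrite /hnorm2 ipDl1 !ipDr1 [ip y x]ipC !(cReD, cReJ); ring.
have := hnorm2_ge0 x; have := hnorm2_ge0 y; lra.
Qed.

Lemma hnorm2_small_eq0 x : (forall e : R, 0 < e -> hnorm2 x <= e) -> x = 0.
Proof.
move=> small; apply: hnorm2_eq0; apply/eqP.
by rewrite eq_le hnorm2_ge0 andbT; apply/ler_addgt0Pr => e /small; rewrite add0r.
Qed.

Lemma orthogonal_dense_eq0 (S : set H) x :
  (forall e : R, 0 < e -> exists2 y, S y & hnorm2 (x - y) < e) ->
  (forall y, S y -> ip x y = 0) -> x = 0.
Proof.
move=> S_dense x_orth; apply: hnorm2_small_eq0 => e e0.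
have [y Sy xy] := S_dense e e0.
have := Re_ip_le x (x - y) 1 ltr01.
by rewrite mul1r divr1 ipBr (x_orth y Sy) subr0 -/(hnorm2 x); lra.
Qed.

Lemma norm_Re_ip_le k z (s : R) : 0 < s ->
  2 * `|complex.Re (ip k z)| <= s * hnorm2 k + hnorm2 z / s.
Proof.
move=> s0; have := Re_ip_le k z s s0; have := Re_ip_le k (- z) s s0.
rewrite hnorm2N ipNr cReN.
by case: (lerP 0 (complex.Re (ip k z))) => h;
  [rewrite ger0_norm | rewrite ltr0_norm]; lra.
Qed.

Lemma norm_Im_ip_le k z (s : R) : 0 < s ->
  2 * `|complex.Im (ip k z)| <= s * hnorm2 k + hnorm2 z / s.
Proof.
move=> s0; have := norm_Re_ip_le k ('i%C *: z) s s0.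
rewrite ipZr hnorm2Z cReM cReJ cImJ /cnorm2 /=.
by rewrite mul0r sub0r mulN1r opprK expr0n add0r expr1n mul1r.
Qed.

Lemma ip_continuousr k {e : R} : 0 < e ->
  exists2 dl : R, 0 < dl & forall z, hnorm2 z < dl -> cabs (ip k z) < e.
Proof.
move=> e0; have k0 := hnorm2_ge0 k.
pose s := e / (2 * (hnorm2 k + 1)).
have s0 : 0 < s by rewrite divr_gt0 // pmulr_rgt0 // ltr_pwDr.
exists (e * s / 2) => [|z zs]; first by rewrite divr_gt0 // mulr_gt0.
have sk : s * hnorm2 k < e / 2.
  rewrite /s mulrAC ltr_pdivrMr ?pmulr_rgt0 ?ltr_pwDr //.
  have -> : e / 2 * (2 * (hnorm2 k + 1)) = e * (hnorm2 k + 1) by field.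
  by rewrite ltr_pM2l // ltrDl.
have zs' : hnorm2 z / s < e / 2 by rewrite ltr_pdivrMr // mulrAC.
have := norm_Re_ip_le k z s s0; have := norm_Im_ip_le k z s s0.
have := cabs_le_ReIm (ip k z); lra.
Qed.

Lemma cvg0_hnorm2 (x : nat -> H) :
  (forall e : R, 0 < e -> exists N, forall n, (N <= n)%N -> hnorm ip (x n) < e) ->
  forall e : R, 0 < e -> exists N, forall n, (N <= n)%N -> hnorm2 (x n) < e.
Proof.
move=> x_cvg e e0; have [N hN] := x_cvg (Num.sqrt e) (ltac:(by rewrite sqrtr_gt0)).
by exists N => n /hN; rewrite hnorm_lt_sqrt.
Qed.
End PreHilbert.

Section ComplexIntegral.
Context {R : realType} {d : measure_display} {X : measurableType d}
  (mu : {measure set X -> \bar R}).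

Local Notation Rintegrable f := (mu.-integrable setT (EFin \o f)).

Definition square_integrable (u : X -> R[i]) :=
  cmeasurable u /\ (\int[mu]_x (cnorm2 (u x))%:E < +oo)%E.

Definition cintegrable (h : X -> R[i]) :=
  Rintegrable (fun x => complex.Re (h x)) /\ Rintegrable (fun x => complex.Im (h x)).

Lemma cmeasurableM {u v : X -> R[i]} : cmeasurable u -> cmeasurable v ->
  cmeasurable (fun x => u x * v x).
Proof.
move=> [ur ui] [vr vi]; split.
- under eq_fun do rewrite cReM.
  exact: measurable_funB (measurable_funM ur vr) (measurable_funM ui vi).
- under eq_fun do rewrite cImM.
  exact: measurable_funD (measurable_funM ur vi) (measurable_funM ui vr).
Qed.

Lemma cmeasurableJ {u : X -> R[i]} : cmeasurable u -> cmeasurable (fun x => (u x)^*).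
Proof.
move=> [ur ui]; split; first by under eq_fun do rewrite cReJ.
by under eq_fun do rewrite cImJ; exact: measurable_funN.
Qed.

Lemma square_integrable_cnorm2 {u} :
  square_integrable u -> Rintegrable (fun x => cnorm2 (u x)).
Proof.
move=> [[ur ui] fin]; apply/integrableP; split.
  apply/measurable_EFinP.
  exact: measurable_funD (measurable_funX 2 ur) (measurable_funX 2 ui).
rewrite (eq_integral (fun x => (cnorm2 (u x))%:E)) // => x _ /=.
by rewrite ger0_norm // cnorm2_ge0.
Qed.

Lemma integrable_ae_le (f g : X -> R) : measurable_fun setT f -> Rintegrable g ->
  (\forall x \ae mu, `|f x| <= g x) -> Rintegrable f.
Proof.
move=> mf /integrableP[mg g_fin] fg; apply/integrableP; split.
  exact/measurable_EFinP.
apply: le_lt_trans g_fin; apply: ae_ge0_le_integral => //.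
- exact/measurable_EFinP/measurableT_comp.
- by apply: measurableT_comp => //; exact: measurableT_comp.
- by apply: filterS fg => x fgx _ /=; rewrite lee_fin (le_trans fgx) ?ler_norm.
Qed.

Lemma RintegralDZ (a b : R) {f g : X -> R} : Rintegrable f -> Rintegrable g ->
  Rintegrable (fun x => a * f x + b * g x) /\
  Rintegral mu setT (fun x => a * f x + b * g x) =
    a * Rintegral mu setT f + b * Rintegral mu setT g.
Proof.
move=> fi gi.
have afi : Rintegrable (fun x => a * f x) by have := integrableZl measurableT a fi.
have bgi : Rintegrable (fun x => b * g x) by have := integrableZl measurableT b gi.
split; first by have := integrableD measurableT afi bgi.
by rewrite RintegralD // !RintegralZl.
Qed.

Lemma cintegrable_Linfty_L2_L2 (m u v : X -> R[i]) :
  Linfty mu m -> square_integrable u -> square_integrable v ->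
  cintegrable (fun x => m x * u x * v x).
Proof.
move=> [mm [K mK]] uL2 vL2.
have [mr mi] := cmeasurableM (cmeasurableM mm uL2.1) vL2.1.
have [dom_int _] := RintegralDZ `|K| `|K|
  (square_integrable_cnorm2 uL2) (square_integrable_cnorm2 vL2).
have dominated : \forall x \ae mu,
    cabs (m x * u x * v x) <= `|K| * cnorm2 (u x) + `|K| * cnorm2 (v x).
  apply: filterS mK => x mxK; rewrite !cabsM -mulrA -mulrDr.
  by rewrite ler_pM ?mulr_ge0 ?cabs_ge0 ?cabsM_le_cnorm2D ?(le_trans mxK) ?ler_norm.
split; apply: integrable_ae_le dom_int _ => //; apply: filterS dominated => x.
  exact: le_trans (cabs_Re _).
exact: le_trans (cabs_Im _).
Qed.

Lemma cintegralDZ (a : R[i]) h1 h2 : cintegrable h1 -> cintegrable h2 ->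
  cintegral mu (fun x => a * h1 x + h2 x) = a * cintegral mu h1 + cintegral mu h2.
Proof.
move=> [r1 i1] [r2 i2].
have [ir1 er1] := RintegralDZ (complex.Re a) (- complex.Im a) r1 i1.
have [ii1 ei1] := RintegralDZ (complex.Re a) (complex.Im a) i1 r1.
have [_ er] := RintegralDZ 1 1 ir1 r2.
have [_ ei] := RintegralDZ 1 1 ii1 i2.
have eRe : Rintegral mu setT (fun x => complex.Re (a * h1 x + h2 x)) =
    1 * (complex.Re a * Rintegral mu setT (fun x => complex.Re (h1 x)) +
         - complex.Im a * Rintegral mu setT (fun x => complex.Im (h1 x))) +
    1 * Rintegral mu setT (fun x => complex.Re (h2 x)).
  rewrite -er1 -er; apply: eq_Rintegral => x _.
  by rewrite cReD cReM !mul1r mulNr.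
have eIm : Rintegral mu setT (fun x => complex.Im (a * h1 x + h2 x)) =
    1 * (complex.Re a * Rintegral mu setT (fun x => complex.Im (h1 x)) +
         complex.Im a * Rintegral mu setT (fun x => complex.Re (h1 x))) +
    1 * Rintegral mu setT (fun x => complex.Im (h2 x)).
  rewrite -ei1 -ei; apply: eq_Rintegral => x _.
  by rewrite cImD cImM !mul1r.
rewrite /cintegral eRe eIm.
by apply/eqP; rewrite eq_complex; apply/andP; split; apply/eqP;
  rewrite !(cReD, cImD, cReM, cImM) /=; ring.
Qed.

Lemma cintegralJ h : cintegrable h ->
  cintegral mu (fun x => (h x)^*) = (cintegral mu h)^*.
Proof.
move=> [r1 i1]; rewrite /cintegral.
under eq_Rintegral do rewrite cReJ.
under [X in (_ +i* X)%C]eq_Rintegral do rewrite cImJ -mulN1r.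
by rewrite RintegralZl // mulN1r.
Qed.
End ComplexIntegral.

Section RieszRepresentative.
Context {R : realType} {H : lmodType R[i]} {ip : H -> H -> R[i]}
  {D : tvsType R[i]} {iota : D -> H}
  {d : measure_display} {X : measurableType d} {mu : {measure set X -> \bar R}}.
Hypothesis hR : rigged_hilbert_space ip iota.
Let hH : hilbert_space ip := hR.1.

Lemma iotaL a x y : iota (a *: x + y) = a *: iota x + iota y.
Proof. by case: hR => _ [h _]; apply: h. Qed.
Lemma iota0 : iota 0 = 0.
Proof. by have := iotaL (-1) 0 0; rewrite scaleN1r addNr scaleN1r addNr. Qed.
Lemma iotaZ a x : iota (a *: x) = a *: iota x.
Proof. by rewrite -[a *: x]addr0 iotaL iota0 addr0. Qed.
Lemma iotaB x y : iota (x - y) = iota x - iota y.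
Proof. by have := iotaL (-1) y x; rewrite !scaleN1r addrC => ->; rewrite addrC. Qed.

Lemma jH_Dx h : Dx D (jH ip iota h).
Proof. by case: hR => _ [_ [_ [_ [_ [h' _]]]]]; apply: h'. Qed.

Lemma iota_dense h {e : R} : 0 < e -> exists f, hnorm2 ip (h - iota f) < e.
Proof.
move=> e0; case: hR => _ [_ [_ [_ [dense _]]]].
have [f hf] := dense h (Num.sqrt e) (ltac:(by rewrite sqrtr_gt0)).
by exists f; rewrite -hnorm_lt_sqrt.
Qed.

Lemma iota_ball_open x {e : R} : 0 < e -> exists U : set D,
  [/\ open U, U x & forall y, U y -> hnorm2 ip (iota y - iota x) < e].
Proof.
move=> e0; case: hR => _ [_ [_ [finer _]]].
have := finer x (Num.sqrt e) (ltac:(by rewrite sqrtr_gt0)).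
rewrite nbhsE => -[U [oU Ux] sU]; exists U; split => // y /sU /=.
by rewrite hnorm_lt_sqrt.
Qed.

Lemma mult_rel_uniq {m om th f h1 h2} :
  mult_rel mu ip iota m om th f h1 -> mult_rel mu ip iota m om th f h2 -> h1 = h2.
Proof.
move=> r1 r2; apply/eqP; rewrite -subr_eq0; apply/eqP.
apply: (orthogonal_dense_eq0 hH (range iota)).
  by move=> e e0; have [f0 hf0] := iota_dense (h1 - h2) e0; exists (iota f0).
by move=> _ [g _ <-]; rewrite (ipBl hH) -r1 -r2 subrr.
Qed.

Lemma mult_opE {m om th f h} :
  mult_rel mu ip iota m om th f h -> mult_op mu ip iota m om th f = h.
Proof.
move=> r; rewrite /mult_op; case: pselect => [e|[]]; last by exists h.
by case: cid => h' r' /=; apply: mult_rel_uniq r' r.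
Qed.

Lemma mult_opP {m om th f} : mult_dom mu ip iota m om th f ->
  mult_rel mu ip iota m om th f (mult_op mu ip iota m om th f).
Proof. by move=> hd; rewrite /mult_op; case: pselect => [e|//]; case: cid. Qed.
End RieszRepresentative.

Section Multiplier.
Context {R : realType} {H : lmodType R[i]} {ip : H -> H -> R[i]}
  {D : tvsType R[i]} {iota : D -> H}
  {d : measure_display} {X : measurableType d} {mu : {measure set X -> \bar R}}
  {om th : X -> D -> R[i]} {m : X -> R[i]}.
Hypotheses (hR : rigged_hilbert_space ip iota)
  (om_bessel : bessel_map mu om) (th_bessel : bessel_map mu th) (m_bdd : Linfty mu m).
Let hH : hilbert_space ip := hR.1.

Local Notation j := (jH ip iota).
Local Notation Mout := (outer_mult mu m om th).
Local Notation Mout' := (outer_mult mu (fun x => (m x)^*) th om).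
Local Notation rel := (mult_rel mu ip iota m om th).
Local Notation dom := (mult_dom mu ip iota m om th).
Local Notation M := (mult_op mu ip iota m om th).
Local Notation dom' := (mult_dom mu ip iota (fun x => (m x)^*) th om).
Local Notation M' := (mult_op mu ip iota (fun x => (m x)^*) th om).

Lemma outer_mult_cintegrable f g :
  cintegrable mu (fun x => m x * (om x f)^* * th x g).
Proof.
apply: cintegrable_Linfty_L2_L2 m_bdd _ _; first by case: om_bessel => _ /(_ f).
case: th_bessel => _ /(_ g) [th_meas th_fin]; split.
  by have := cmeasurableJ th_meas; under eq_fun do rewrite conjCK.
by under eq_integral do rewrite -cnorm2J.
Qed.

Lemma outer_multDl a f f' g : Mout (a *: f + f') g = a * Mout f g + Mout f' g.
Proof.
rewrite /outer_mult -cintegralDZ; try exact: outer_mult_cintegrable.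
congr cintegral; apply: funext => x.
by case: (om_bessel.1 x) => -> // _; rewrite rmorphD rmorphM /= conjCK; ring.
Qed.

Lemma outer_mult0 g : Mout 0 g = 0.
Proof. by have := outer_multDl (-1) 0 0 g; rewrite scaleN1r oppr0 addr0 mulN1r addNr. Qed.

Lemma outer_mult_conj f g : Mout' g f = (Mout f g)^*.
Proof.
rewrite /outer_mult -cintegralJ; last exact: outer_mult_cintegrable.
by congr cintegral; apply: funext => x; rewrite !rmorphM /= conjCK; ring.
Qed.

Lemma mult_relE f h : rel f h <-> Mout f = j h.
Proof. by split=> [r|e g]; [apply: funext => g; rewrite r | rewrite e]. Qed.

Lemma mult_relB {f g h k} : rel f h -> rel g k -> rel (f - g) (h - k).
Proof.
move=> rf rg x; have -> : f - g = (-1) *: g + f by rewrite scaleN1r addrC.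
by rewrite outer_multDl rf rg (ipBl hH) mulN1r addrC.
Qed.

Context {Minv : (D -> R[i]) -> D}.
Hypotheses (Mout_Dx : forall f, Dx D (Mout f))
  (Mout_bij : forall F, Dx D F -> exists! f, Mout f = F)
  (MinvK : forall F, Dx D F -> Mout (Minv F) = F)
  (Minv_cont : forall U : set D, open U -> Dx_open D [set F | Dx D F /\ U (Minv F)]).

Lemma Mout_inj f g : Mout f = Mout g -> f = g.
Proof.
move=> e; have [f0 [_ uniq]] := Mout_bij _ (Mout_Dx f).
by rewrite -(uniq f erefl) -(uniq g (esym e)).
Qed.

Lemma MoutK : cancel Mout Minv.
Proof. by move=> f; apply: Mout_inj; rewrite MinvK. Qed.

Lemma mult_rel_Minv h : rel (Minv (j h)) h.
Proof. by apply/mult_relE; apply: MinvK; exact: jH_Dx. Qed.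

Lemma mult_rel_eq_Minv f h : rel f h -> f = Minv (j h).
Proof. by move/mult_relE <-; rewrite MoutK. Qed.

Lemma Minv_jHZ c h : Minv (j (c *: h)) = c *: Minv (j h).
Proof.
apply: Mout_inj; rewrite MinvK; last exact: jH_Dx.
apply: funext => g; rewrite -[c *: Minv _]addr0 outer_multDl outer_mult0 addr0 MinvK.
  by rewrite /jH (ipZl hH).
exact: jH_Dx.
Qed.

Lemma Minv_jH0 : Minv (j 0) = 0.
Proof. by rewrite -(scale0r 0) Minv_jHZ scale0r. Qed.

Lemma Minv_jH_bounded_near0 : exists2 dl : R, 0 < dl &
  forall h, hnorm2 ip h < dl -> hnorm2 ip (iota (Minv (j h))) < 1.
Proof.
have [U [oU U0 U1]] := iota_ball_open hR 0 ltr01.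
have [_ [_ [_ [_ [_ [_ [j_cont _]]]]]]] := hR.
have A0 : [set F | Dx D F /\ U (Minv F)] (j 0) by split; [exact: jH_Dx | rewrite Minv_jH0].
have [e e0 he] := j_cont 0 _ (Minv_cont _ oU) A0.
exists (e ^+ 2) => [|h h_small]; first by rewrite exprn_gt0.
have [_ /U1] : [set F | Dx D F /\ U (Minv F)] (j h).
  by apply: he; rewrite subr0 hnorm_lt.
by rewrite (iota0 hR) subr0.
Qed.

Lemma mult_rel_bounded_below : exists2 C : R, 0 < C &
  forall f h, rel f h -> hnorm2 ip (iota f) <= C * hnorm2 ip h.
Proof.
have [dl dl0 small] := Minv_jH_bounded_near0.
exists (2 / dl) => [|f h /mult_rel_eq_Minv ->]; first by rewrite divr_gt0.
have [h0|h_neq0] := eqVneq (hnorm2 ip h) 0.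
  by rewrite (hnorm2_eq0 hH _ h0) Minv_jH0 (iota0 hR) (hnorm2_0 hH) mulr0.
have h_gt0 : 0 < hnorm2 ip h by rewrite lt_def h_neq0 (hnorm2_ge0 hH).
(* Rescale h to squared norm dl / 2 and use the homogeneity of Minv \o jH. *)
pose t := dl / (2 * hnorm2 ip h).
have t0 : 0 < t by rewrite divr_gt0 // mulr_gt0.
pose c := (Num.sqrt t)%:C%C.
have c2 : cnorm2 c = t by rewrite cnorm2R sqr_sqrtr // ltW.
have := small (c *: h); rewrite Minv_jHZ (iotaZ hR) !(hnorm2Z hH) c2.
have -> : t * hnorm2 ip h = dl / 2 by rewrite /t; field.
move=> /(_ ltac:(lra)) small_f.
have -> : 2 / dl * hnorm2 ip h = t^-1 by rewrite /t invf_div mulrAC.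
by rewrite -(ler_pM2l t0) mulfV ?gt_eqF // ltW.
Qed.

Lemma mult_dom_dense h (e : R) : 0 < e ->
  exists2 f, dom f & hnorm ip (h - iota f) < e.
Proof.
move=> e0; set E := e ^+ 2; have E4 : 0 < E / 4 by rewrite divr_gt0 ?exprn_gt0.
have [f0 hf0] := iota_dense hR h E4.
have [U [oU Uf0 U_ball]] := iota_ball_open hR f0 E4.
have AMf0 : [set F | Dx D F /\ U (Minv F)] (Mout f0) by rewrite /= MoutK.
have [_ [_ [_ [_ [_ [_ [_ H_dense]]]]]]] := hR.
have [h1 [_ Uh1]] := H_dense _ (Minv_cont _ oU) (ex_intro _ _ AMf0).
exists (Minv (j h1)); first by exists h1; exact: mult_rel_Minv.
rewrite hnorm_lt // -/E.
have -> : h - iota (Minv (j h1)) = (h - iota f0) + - (iota (Minv (j h1)) - iota f0).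
  by rewrite opprB addrA subrK.
apply: le_lt_trans (hnorm2D hH _ _) _.
by rewrite (hnorm2N hH); have := U_ball _ Uh1; lra.
Qed.

Lemma mult_op_closed (u : nat -> D) (a b : H) : (forall n, dom (u n)) ->
  (forall e : R, 0 < e -> exists N, forall n, (N <= n)%N -> hnorm ip (iota (u n) - a) < e) ->
  (forall e : R, 0 < e -> exists N, forall n, (N <= n)%N -> hnorm ip (M (u n) - b) < e) ->
  exists2 f, dom f & iota f = a /\ M f = b.
Proof.
move=> u_dom /cvg0_hnorm2 u_cvg /cvg0_hnorm2 Mu_cvg.
have rb := mult_rel_Minv b; set f := Minv _ in rb.
exists f; first by exists b.
split; last exact: (mult_opE hR rb).
apply/eqP; rewrite -subr_eq0; apply/eqP; apply: (hnorm2_small_eq0 hH) => e e0.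
have [C C0 bdd] := mult_rel_bounded_below.
have e4C : 0 < e / (4 * C) by rewrite divr_gt0 // mulr_gt0.
have e4 : 0 < e / 4 by rewrite divr_gt0.
have [N1 hN1] := Mu_cvg _ e4C; have [N2 hN2] := u_cvg _ e4.
pose n := maxn N1 N2.
have Mun := hN1 n (leq_maxl _ _); have un := hN2 n (leq_maxr _ _).
have f_un : hnorm2 ip (iota f - iota (u n)) <= e / 4.
  have := bdd _ _ (mult_relB rb (mult_opP (u_dom n))).
  rewrite (iotaB hR) -(hnorm2N hH (b - _)) opprB => /le_trans; apply.
  have -> : e / 4 = C * (e / (4 * C)) by field; rewrite gt_eqF.
  by rewrite ler_pM2l // ltW.
have -> : iota f - a = (iota f - iota (u n)) + (iota (u n) - a) by rewrite addrA subrK.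
apply: le_trans (hnorm2D hH _ _) _; lra.
Qed.

Lemma mult_op_inj f g : dom f -> dom g -> M f = M g -> f = g.
Proof.
move=> /mult_opP/mult_rel_eq_Minv ef /mult_opP/mult_rel_eq_Minv eg Mfg.
by rewrite ef eg Mfg.
Qed.

Lemma mult_op_surj h : exists2 f, dom f & M f = h.
Proof.
exists (Minv (j h)); first by exists h; exact: mult_rel_Minv.
exact: (mult_opE hR (mult_rel_Minv h)).
Qed.

Lemma mult_op_bounded_inverse :
  exists K : R, forall f, dom f -> hnorm ip (iota f) <= K * hnorm ip (M f).
Proof.
have [C C0 bdd] := mult_rel_bounded_below.
exists (Num.sqrt C) => f /mult_opP/bdd f_bdd.
by rewrite /hnorm -sqrtrM ?(ltW C0) // ler_wsqrtr.
Qed.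

Definition adjoint_functional (k : H) (F : D -> R[i]) : R[i] :=
  if `[< Dx D F >] then ip k (iota (Minv F)) else 0.

Lemma adjoint_functional_Dxx k : Dxx D (adjoint_functional k).
Proof.
split; [|split].
- move=> a F G DF DG.
  have -> : a *: F + G = Mout (a *: Minv F + Minv G).
    by apply: funext => g; rewrite outer_multDl !MinvK.
  by rewrite /adjoint_functional !asboolT ?Mout_Dx // MoutK (iotaL hR) (ipDr hH).
- move=> F DF e e0.
  have [dl dl0 small] := ip_continuousr hH k e0.
  have [U [oU UF U_ball]] := iota_ball_open hR (Minv F) dl0.
  exists [set G | Dx D G /\ U (Minv G)]; split; first exact: Minv_cont.
  split=> // G [DG UG] _; rewrite /adjoint_functional !asboolT // -(ipBr hH).
  exact/small/U_ball.
- by move=> F DF; rewrite /adjoint_functional asboolF.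
Qed.

Lemma adjoint_graph_sub (D_refl : reflexive_space D) :
  adjoint_graph ip iota dom M `<=` op_graph iota dom' M'.
Proof.
move=> [g k] /= adj.
have [_ [_ [Jcan_onto _]]] := D_refl.
have [f' f'E] := Jcan_onto _ (adjoint_functional_Dxx k).
have Mout_f' f : (Mout f f')^* = ip k (iota f).
  have := congr1 (fun P => P (Mout f)) f'E.
  by rewrite /Jcan /adjoint_functional /= !asboolT ?Mout_Dx // MoutK.
have rel' : mult_rel mu ip iota (fun x => (m x)^*) th om f' k.
  by move=> f; rewrite outer_mult_conj Mout_f'.
have -> : g = iota f'.
  apply/eqP; rewrite -subr_eq0; apply/eqP.
  have orth h : ip h (g - iota f') = 0.
    have rh := mult_rel_Minv h.
    have := adj _ (ex_intro _ h rh); rewrite (mult_opE hR rh) (ipBr hH) => ->.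
    by rewrite -rh -[Mout _ f']conjCK Mout_f' -(ipC hH) subrr.
  exact: (ip_eq0 hH) (orth _).
by exists f'; [exists k | rewrite (mult_opE hR rel')].
Qed.

Lemma op_graph_sub_adjoint : op_graph iota dom' M' `<=` adjoint_graph ip iota dom M.
Proof.
move=> _ [f' /mult_opP rf' <-] f /mult_opP rf /=.
by rewrite -rf -[Mout f f']conjCK -outer_mult_conj rf' -(ipC hH).
Qed.

Lemma mult_op_adjoint : reflexive_space D ->
  adjoint_graph ip iota dom M = op_graph iota dom' M'.
Proof.
move=> D_refl; apply/seteqP.
by split; [exact: adjoint_graph_sub | exact: op_graph_sub_adjoint].
Qed.
End Multiplier.

Theorem proposition4p1 (R : realType) (H : lmodType R[i]) (ip : H -> H -> R[i])
  (D : tvsType R[i]) (iota : D -> H)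
  (d : measure_display) (X : measurableType d) (mu : {measure set X -> \bar R})
  (om th : X -> D -> R[i]) (m : X -> R[i]) :
  rigged_hilbert_space ip iota ->
  frechet_space D -> reflexive_space D ->
  sigma_finite setT mu ->
  bessel_map mu om -> bessel_map mu th -> Linfty mu m ->
  (forall f, Dx D (outer_mult mu m om th f)) ->
  (forall F, Dx D F -> exists! f, outer_mult mu m om th f = F) ->
  (exists Minv : (D -> R[i]) -> D,
     (forall F, Dx D F -> outer_mult mu m om th (Minv F) = F) /\
     (forall U : set D, open U -> Dx_open D [set F | Dx D F /\ U (Minv F)])) ->
  let dom := mult_dom mu ip iota m om th in
  let M := mult_op mu ip iota m om th in
  ((forall f g, dom f -> dom g -> M f = M g -> f = g) /\
   (forall h, exists2 f, dom f & M f = h) /\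
   (forall h (e : R), 0 < e -> exists2 f, dom f & hnorm ip (h - iota f) < e) /\
   (exists K : R, forall f, dom f -> hnorm ip (iota f) <= K * hnorm ip (M f)) /\
   (forall (u : nat -> D) (a b : H), (forall n, dom (u n)) ->
      (forall e : R, 0 < e -> exists N, forall n, (N <= n)%N -> hnorm ip (iota (u n) - a) < e) ->
      (forall e : R, 0 < e -> exists N, forall n, (N <= n)%N -> hnorm ip (M (u n) - b) < e) ->
      exists2 f, dom f & iota f = a /\ M f = b)) /\
  adjoint_graph ip iota dom M =
    op_graph iota (mult_dom mu ip iota (fun x => (m x)^*) th om)
                  (mult_op mu ip iota (fun x => (m x)^*) th om).
Proof.
move=> hR _ D_refl _ om_bessel th_bessel m_bdd Mout_Dx Mout_bij
  [Minv [MinvK Minv_cont]] dom M.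
split; last exact: (mult_op_adjoint hR om_bessel th_bessel m_bdd
  Mout_Dx Mout_bij MinvK Minv_cont).
split; first exact: (mult_op_inj Mout_Dx Mout_bij MinvK).
split; first exact: (mult_op_surj hR MinvK).
split; first exact: (mult_dom_dense hR Mout_Dx Mout_bij MinvK Minv_cont).
split; first exact: (mult_op_bounded_inverse hR om_bessel th_bessel m_bdd
  Mout_Dx Mout_bij MinvK Minv_cont).
exact: (mult_op_closed hR om_bessel th_bessel m_bdd Mout_Dx Mout_bij MinvK Minv_cont).
Qed.
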